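(* Let $a\in\mathbb{R}$, $w\in\mathbb{C}\setminus\mathbb{R}$ with $\varphi := |\operatorname{Arg}(w)|\in(0,\pi/2]$, and $\tau>0$. Then all roots of $z + a - we^{-\tau z} = 0$ have negative real parts if and only if $$a > 0\quad\text{and}\quad |w| < \frac{1}{\tau}R(-\tau a;\varphi).$$
   Context: $\operatorname{Arg}(w)\in(-\pi,\pi]$ is the principal argument. For $\varphi\in(0,\pi/2]$, $C(\theta;\varphi) := \theta\cot(\theta-\varphi)$ is a strictly decreasing bijection from $[0,\varphi)$ onto $(-\infty,0]$ with inverse $C^{-1}(\cdot;\varphi)$, and $R(r;\varphi) := -C^{-1}(r;\varphi)/\sin(C^{-1}(r;\varphi)-\varphi)$ for $r\le0$. *)

From Stdlib Require Import Reals ClassicalEpsilon.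
From Coquelicot Require Import Coquelicot.
Open Scope R_scope.

Definition Cexp (z : C) : C :=
  (exp (Re z) * cos (Im z), exp (Re z) * sin (Im z)).

(* principal argument Arg w in (-pi, pi] (for w <> 0) *)
Definition Arg (w : C) : R :=
  if Rle_dec 0 (Im w) then acos (Re w / Cmod w) else - acos (Re w / Cmod w).

Definition cot (x : R) : R := cos x / sin x.

Definition Cfun (theta phi : R) : R := theta * cot (theta - phi).

(* inverse of C(.;phi) : [0,phi) -> (-oo,0], chosen by description
   (it is a bijection for phi in (0, pi/2]) *)
Definition Cinv (r phi : R) : R :=
  epsilon (inhabits 0) (fun theta => 0 <= theta < phi /\ Cfun theta phi = r).

Definition Rfun (r phi : R) : R :=
  - Cinv r phi / sin (Cinv r phi - phi).

From Pilot Require Import Defs.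
From Stdlib Require Import Reals Lra Psatz ClassicalEpsilon Ranalysis5.
From Coquelicot Require Import Coquelicot.
Open Scope R_scope.

(* Write w = |w| e^{i s phi} with phi = |Arg w| and s = +-1 the sign of Im w.
   Putting X = tau Re z, Y = s tau Im z, b = tau a and K = tau |w|, a root is
   exactly a solution of the characteristic system
        (X + b) + i Y = K e^{-X} e^{i (phi - Y)}.
   The boundary curve t |-> D(t) + i t, D(t) = t cot (phi - t) = - C(t; phi),
   has modulus m(t) = t / sin (phi - t); D is an increasing bijection from
   [0, phi) onto [0, +oo), and R(-b; phi) = m(theta) for theta = C^{-1}(-b; phi).
   - If b > 0 and K < R, a root with X >= 0 would give a point of modulus
     K e^{-X} <= K below R, impossible since R is the least modulus of such
     points ([Rfun_le_modulus]).
   - If b <= 0 or R <= K, the intermediate value theorem along the curve yields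
     a solution with X = D(Y) - b >= 0 ([unstable_root_exists]).
   This gives the scaled statement [scaled_stability]; the theorem follows by
   translating roots into solutions of the system ([stable_iff_scaled]). *)

Lemma exp_le_1 (x : R) : x <= 0 -> exp x <= 1.
Proof.
  intros Hx. rewrite <- exp_0.
  destruct (Req_dec x 0) as [->|Hne]; [lra|].
  left; apply exp_increasing; lra.
Qed.

Lemma IVT_le (f : R -> R) (x y : R) :
  (forall t, x <= t <= y -> continuity_pt f t) -> x <= y -> f x <= 0 -> 0 <= f y ->
  exists t, x <= t <= y /\ f t = 0.
Proof.
  intros Hc Hxy Hx Hy.
  destruct (Req_dec (f x) 0) as [Ex|Nx]; [exists x; split; [lra|exact Ex]|].
  destruct (Req_dec (f y) 0) as [Ey|Ny]; [exists y; split; [lra|exact Ey]|].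
  destruct (Req_dec x y) as [->|Nxy]; [lra|].
  destruct (IVT_interv f x y Hc ltac:(lra) ltac:(lra) ltac:(lra)) as [t Ht].
  exists t; exact Ht.
Qed.

Lemma polar_sq (rho u : R) : (rho * cos u) ^ 2 + (rho * sin u) ^ 2 = rho ^ 2.
Proof.
  pose proof (sin2_cos2 u) as H. unfold Rsqr in H.
  replace ((rho * cos u) ^ 2 + (rho * sin u) ^ 2)
    with (rho ^ 2 * (sin u * sin u + cos u * cos u)) by ring.
  rewrite H; ring.
Qed.

(* The parametrised boundary curve.  For 0 <= t < phi the point
   D(t) + i t = m(t) e^{i(phi - t)} with modulus m(t) = t / sin (phi - t);
   D(t) = t cot (phi - t) = - C(t; phi). *)
Definition Dfun (phi t : R) : R := t * cos (phi - t) / sin (phi - t).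
Definition modulus (phi t : R) : R := t / sin (phi - t).

(* The system satisfied by a root, written in the scaled unknowns
   X = tau Re z, Y = +-tau Im z with b = tau a and K = tau |w|. *)
Definition char_system (phi b K X Y : R) : Prop :=
  X + b = K * exp (- X) * cos (phi - Y) /\ Y = K * exp (- X) * sin (phi - Y).

Lemma Dfun_0 (phi : R) : Dfun phi 0 = 0.
Proof. unfold Dfun; lra. Qed.

Lemma Dfun_modulus (phi t : R) : Dfun phi t = modulus phi t * cos (phi - t).
Proof. unfold Dfun, modulus, Rdiv; ring. Qed.

Section BoundaryCurve.

Variable phi : R.
Hypothesis Hphi : 0 < phi <= PI / 2.

Lemma sin_shift_pos (t : R) : - phi < t < phi -> 0 < sin (phi - t).
Proof. intros Ht. pose proof PI_RGT_0. apply sin_gt_0; lra. Qed.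

Lemma modulus_sin (t : R) : - phi < t < phi -> t = modulus phi t * sin (phi - t).
Proof.
  intros Ht. pose proof (sin_shift_pos t Ht). unfold modulus. field; lra.
Qed.

Lemma Cfun_Dfun (t : R) : - phi < t < phi -> Cfun t phi = - Dfun phi t.
Proof.
  intros Ht. pose proof (sin_shift_pos t Ht).
  unfold Cfun, cot, Dfun. replace (t - phi) with (- (phi - t)) by ring.
  rewrite cos_neg, sin_neg. field; lra.
Qed.

Lemma Dfun_continuous (t : R) : - phi < t < phi -> continuity_pt (Dfun phi) t.
Proof.
  intros Ht. pose proof (sin_shift_pos t Ht).
  apply continuity_pt_filterlim, (ex_derive_continuous (Dfun phi) t).
  unfold Dfun; auto_derive. apply Rgt_not_eq; exact H.
Qed.

(* D is strictly increasing on [0, phi): cross-multiplying, this is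
   t1 cos u1 sin u2 < t2 cos u2 sin u1 with u_i = phi - t_i, which follows from
   sin (u1 - u2) > 0. *)
Lemma Dfun_increasing (t1 t2 : R) : 0 <= t1 -> t1 < t2 -> t2 < phi ->
  Dfun phi t1 < Dfun phi t2.
Proof.
  intros H1 H12 H2. pose proof PI_RGT_0.
  set (u1 := phi - t1). set (u2 := phi - t2).
  assert (s1 : 0 < sin u1) by (apply sin_gt_0; unfold u1; lra).
  assert (s2 : 0 < sin u2) by (apply sin_gt_0; unfold u2; lra).
  assert (c1 : 0 <= cos u1) by (apply cos_ge_0; unfold u1; lra).
  assert (sd : 0 < sin (u1 - u2)) by (apply sin_gt_0; unfold u1, u2; lra).
  rewrite sin_minus in sd.
  assert (E1 : Dfun phi t1 = t1 * cos u1 * sin u2 / (sin u1 * sin u2))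
    by (unfold Dfun; fold u1; field; lra).
  assert (E2 : Dfun phi t2 = t2 * cos u2 * sin u1 / (sin u1 * sin u2))
    by (unfold Dfun; fold u2; field; lra).
  rewrite E1, E2. unfold Rdiv. apply Rmult_lt_compat_r.
  - apply Rinv_0_lt_compat; nra.
  - assert (0 <= cos u1 * sin u2) by nra. nra.
Qed.

(* The modulus blows up as t -> phi: for every A > 0 and lo < phi there is
   t in (lo, phi) with t >= phi/2 and m(t) > A (use sin u < u for u = phi - t). *)
Lemma modulus_unbounded (A lo : R) : 0 < A -> lo < phi ->
  exists t, lo < t < phi /\ phi / 2 <= t /\ A < modulus phi t.
Proof.
  intros HA Hlo. pose proof PI_RGT_0.
  set (u := Rmin ((phi - lo) / 2) (phi / (2 * (1 + A)))).
  assert (Hu0 : 0 < u) by (apply Rmin_glb_lt; apply Rdiv_lt_0_compat; lra).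
  assert (Hu1 : u <= (phi - lo) / 2) by apply Rmin_l.
  assert (Hu2 : 2 * (1 + A) * u <= phi).
  { pose proof (Rmin_r ((phi - lo) / 2) (phi / (2 * (1 + A)))) as Hr; fold u in Hr.
    apply (Rmult_le_compat_l (2 * (1 + A))) in Hr; [|lra].
    replace (2 * (1 + A) * (phi / (2 * (1 + A)))) with phi in Hr by (field; lra).
    exact Hr. }
  exists (phi - u). repeat split; try nra.
  unfold modulus. replace (phi - (phi - u)) with u by ring.
  assert (Hs : 0 < sin u) by (apply sin_gt_0; nra).
  assert (Hsu : sin u < u) by (apply sin_lt_x; lra).
  apply (Rmult_lt_reg_r (sin u)); [lra|].
  unfold Rdiv. rewrite Rmult_assoc, Rinv_l, Rmult_1_r by lra. nra.
Qed.

(* Hence D is unbounded too, since cos (phi - t) >= cos (phi/2) > 0 for t >= phi/2. *)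
Lemma Dfun_unbounded (A : R) : 0 < A -> exists t, 0 < t < phi /\ A < Dfun phi t.
Proof.
  intros HA. pose proof PI_RGT_0.
  assert (Hc : 0 < cos (phi / 2)) by (apply cos_gt_0; lra).
  destruct (modulus_unbounded (A / cos (phi / 2)) (phi / 2)) as [t [Ht [Ht2 HAt]]];
    [apply Rdiv_lt_0_compat; lra | lra |].
  exists t. split; [lra|].
  assert (Hct : cos (phi / 2) <= cos (phi - t)).
  { destruct (Req_dec t (phi / 2)) as [E|Ne]; [rewrite E; right; f_equal; lra|].
    left; apply cos_decreasing_1; lra. }
  assert (HA' : A < modulus phi t * cos (phi / 2)).
  { apply (Rmult_lt_compat_r (cos (phi / 2))) in HAt; [|lra].
    unfold Rdiv in HAt. rewrite Rmult_assoc, Rinv_l, Rmult_1_r in HAt by lra. exact HAt. }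
  rewrite Dfun_modulus.
  assert (0 <= modulus phi t) by (unfold modulus; apply Rdiv_le_0_compat;
    [lra | apply sin_shift_pos; lra]).
  nra.
Qed.

Lemma Dfun_surjective (A : R) : 0 < A -> exists t, 0 < t < phi /\ Dfun phi t = A.
Proof.
  intros HA.
  destruct (Dfun_unbounded A HA) as [t1 [Ht1 HA1]].
  destruct (IVT_le (fun t => Dfun phi t - A) 0 t1) as [t [Ht Heq]].
  - intros t Ht. apply continuity_pt_minus;
      [apply Dfun_continuous; lra | apply continuity_pt_const; intros ? ?; reflexivity].
  - lra.
  - rewrite Dfun_0; lra.
  - lra.
  - exists t. destruct (Req_dec t 0) as [->|Hne]; [rewrite Dfun_0 in Heq; lra | lra].
Qed.

Lemma Cinv_spec (A : R) : 0 < A ->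
  0 < Defs.Cinv (- A) phi < phi /\ Dfun phi (Defs.Cinv (- A) phi) = A.
Proof.
  intros HA.
  assert (Hs : 0 <= Defs.Cinv (- A) phi < phi /\ Cfun (Defs.Cinv (- A) phi) phi = - A).
  { unfold Defs.Cinv. apply epsilon_spec.
    destruct (Dfun_surjective A HA) as [t [Ht HD]].
    exists t. split; [lra|]. rewrite Cfun_Dfun by lra. rewrite HD; ring. }
  destruct Hs as [Hb HC]. rewrite Cfun_Dfun in HC by lra.
  assert (HD : Dfun phi (Defs.Cinv (- A) phi) = A) by lra.
  split; [|exact HD]. split; [|lra].
  destruct (Req_dec (Defs.Cinv (- A) phi) 0) as [E|]; [|lra].
  rewrite E, Dfun_0 in HD. lra.
Qed.

Lemma Rfun_modulus (A : R) : 0 < A -> Rfun (- A) phi = modulus phi (Defs.Cinv (- A) phi).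
Proof.
  intros HA. destruct (Cinv_spec A HA) as [Hth _].
  pose proof (sin_shift_pos (Defs.Cinv (- A) phi) ltac:(lra)).
  unfold Rfun, modulus. replace (Defs.Cinv (- A) phi - phi) with (- (phi - Defs.Cinv (- A) phi)) by ring.
  rewrite sin_neg. field. lra.
Qed.

(* Since rho^2 = (X+b)^2 + Y^2 and R^2 = b^2 + theta^2,
   it suffices that |Y| >= theta, and Y in [0, theta) is excluded because
   D(Y) = X + b >= b = D(theta) contradicts monotonicity. *)
Lemma Rfun_le_modulus (b X Y rho : R) : 0 < b -> 0 <= X -> 0 <= rho ->
  X + b = rho * cos (phi - Y) -> Y = rho * sin (phi - Y) -> Rfun (- b) phi <= rho.
Proof.
  intros Hb HX Hr E1 E2.
  destruct (Cinv_spec b Hb) as [Hth HD].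
  set (th := Defs.Cinv (- b) phi) in *.
  assert (HY : th ^ 2 <= Y ^ 2).
  { destruct (Rle_dec phi Y) as [H1|H1]; [nra|].
    destruct (Rle_dec Y (- phi)) as [H2|H2]; [nra|].
    pose proof (sin_shift_pos Y ltac:(lra)).
    destruct (Rle_dec Y 0) as [H3|H3].
    - assert (rho <> 0) by (intro Hz; rewrite Hz in E1; lra). nra.
    - destruct (Rle_dec th Y) as [H4|H4]; [nra|].
      assert (DY : Dfun phi Y = X + b).
      { rewrite E1, Dfun_modulus. f_equal.
        unfold modulus. rewrite E2 at 1. field. lra. }
      pose proof (Dfun_increasing Y th ltac:(lra) ltac:(lra) ltac:(lra)). lra. }
  assert (HR2 : Rfun (- b) phi ^ 2 = b ^ 2 + th ^ 2).
  { pose proof (polar_sq (modulus phi th) (phi - th)) as P.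
    rewrite <- modulus_sin in P by lra. rewrite Dfun_modulus in HD.
    rewrite Rfun_modulus by exact Hb. fold th. rewrite <- HD. lra. }
  assert (Hrho2 : rho ^ 2 = (X + b) ^ 2 + Y ^ 2).
  { pose proof (polar_sq rho (phi - Y)) as P. rewrite <- E1, <- E2 in P. lra. }
  assert (HR0 : 0 <= Rfun (- b) phi).
  { rewrite Rfun_modulus by exact Hb. fold th. unfold modulus.
    apply Rdiv_le_0_compat; [lra | apply sin_shift_pos; lra]. }
  apply Rsqr_incr_0_var; [unfold Rsqr; nra | exact Hr].
Qed.

Lemma Dfun_le (t1 t2 : R) : 0 <= t1 -> t1 <= t2 -> t2 < phi -> Dfun phi t1 <= Dfun phi t2.
Proof.
  intros H1 H12 H2. destruct (Req_dec t1 t2) as [->|Hne]; [lra|].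
  left; apply Dfun_increasing; lra.
Qed.

Lemma curve_point_solves (b K Y : R) : 0 <= Y < phi ->
  modulus phi Y = K * exp (- (Dfun phi Y - b)) -> char_system phi b K (Dfun phi Y - b) Y.
Proof.
  intros HY Hm. unfold char_system. rewrite <- Hm. split.
  - rewrite Dfun_modulus; ring.
  - apply modulus_sin; lra.
Qed.

Lemma modulus_gap_continuous (b K t : R) : - phi < t < phi ->
  continuity_pt (fun y => modulus phi y - K * exp (- (Dfun phi y - b))) t.
Proof.
  intros Ht. pose proof (sin_shift_pos t Ht).
  apply continuity_pt_filterlim,
    (ex_derive_continuous (fun y => modulus phi y - K * exp (- (Dfun phi y - b))) t).
  unfold modulus, Dfun; auto_derive. split; [apply Rgt_not_eq; exact H|].
  split; [apply Rgt_not_eq; exact H | exact I].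
Qed.

(* Existence of a root with X >= 0: starting from a curve point y0 with
   D(y0) >= b whose modulus is at most K e^{-(D(y0) - b)}, the intermediate value
   theorem applied to m(y) - K e^{-(D(y) - b)} on [y0, y1], where m(y1) > K,
   gives a curve point solving the system. *)
Lemma curve_solution (b K y0 : R) : 0 < K -> 0 <= y0 < phi -> b <= Dfun phi y0 ->
  modulus phi y0 <= K * exp (- (Dfun phi y0 - b)) ->
  exists X Y, 0 <= X /\ char_system phi b K X Y.
Proof.
  intros HK Hy0 Hb Hm0.
  destruct (modulus_unbounded K y0 HK ltac:(lra)) as [y1 [Hy1 [_ Hm1]]].
  assert (Hgap1 : K * exp (- (Dfun phi y1 - b)) <= K).
  { pose proof (Dfun_le y0 y1 ltac:(lra) ltac:(lra) ltac:(lra)).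
    pose proof (exp_le_1 (- (Dfun phi y1 - b)) ltac:(lra)).
    pose proof (exp_pos (- (Dfun phi y1 - b))). nra. }
  destruct (IVT_le (fun y => modulus phi y - K * exp (- (Dfun phi y - b))) y0 y1)
    as [Y [HY HgapY]].
  - intros t Ht. apply modulus_gap_continuous; lra.
  - lra.
  - lra.
  - lra.
  - exists (Dfun phi Y - b), Y. split.
    + pose proof (Dfun_le y0 Y ltac:(lra) ltac:(lra) ltac:(lra)). lra.
    + apply curve_point_solves; lra.
Qed.

(* Instability: if b <= 0 (start at y0 = 0) or R(-b; phi) <= K (start at
   y0 = theta, where D(theta) = b and m(theta) = R), a root with X >= 0 exists. *)
Lemma unstable_root_exists (b K : R) : 0 < K -> (b <= 0 \/ Rfun (- b) phi <= K) ->
  exists X Y, 0 <= X /\ char_system phi b K X Y.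
Proof.
  intros HK Hcase.
  destruct (Rle_dec b 0) as [Hb|Hb].
  - apply (curve_solution b K 0 HK); [lra | rewrite Dfun_0; lra |].
    pose proof (exp_pos (- (Dfun phi 0 - b))).
    unfold modulus; replace (0 / sin (phi - 0)) with 0 by (unfold Rdiv; ring). nra.
  - destruct Hcase as [|HR]; [lra|].
    destruct (Cinv_spec b ltac:(lra)) as [Hth HD].
    apply (curve_solution b K (Defs.Cinv (- b) phi) HK); [lra | lra |].
    rewrite HD, <- Rfun_modulus by lra.
    replace (- (b - b)) with 0 by ring. rewrite exp_0. lra.
Qed.

Lemma scaled_stability (b K : R) : 0 < K ->
  (forall X Y, char_system phi b K X Y -> X < 0) <-> (0 < b /\ K < Rfun (- b) phi).
Proof.
  intros HK. split.
  - intros Hstable.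
    destruct (Rlt_dec 0 b) as [Hb|Hb];
      [destruct (Rlt_dec K (Rfun (- b) phi)) as [HR|HR]; [tauto|] |];
      exfalso; destruct (unstable_root_exists b K HK ltac:(lra)) as [X [Y [HX Hsys]]];
      pose proof (Hstable X Y Hsys); lra.
  - intros [Hb HR] X Y [E1 E2].
    destruct (Rlt_dec X 0) as [|HX]; [assumption|exfalso].
    pose proof (exp_pos (- X)).
    pose proof (exp_le_1 (- X) ltac:(lra)).
    pose proof (Rfun_le_modulus b X Y (K * exp (- X)) Hb ltac:(lra) ltac:(nra) E1 E2).
    nra.
Qed.

End BoundaryCurve.

Lemma polar_form (w : C) : Im w <> 0 ->
  0 < Cmod w /\ Re w = Cmod w * cos (Rabs (Arg w)) /\
  exists s, (s = 1 \/ s = -1) /\ Im w = s * (Cmod w * sin (Rabs (Arg w))).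
Proof.
  intros Hd. pose proof (Cmod2_alt w) as Hm2. pose proof (Cmod_ge_0 w).
  set (m := Cmod w) in *. set (c := Re w) in *. set (d := Im w) in *.
  assert (Hm : 0 < m) by (destruct (Req_dec m 0) as [E|]; [rewrite E in Hm2; nra | lra]).
  assert (Hb : -1 <= c / m <= 1).
  { split; apply (Rmult_le_reg_r m); try lra; unfold Rdiv;
      rewrite Rmult_assoc, Rinv_l, Rmult_1_r by lra; nra. }
  assert (HA : Rabs (Arg w) = acos (c / m)).
  { pose proof (acos_bound (c / m)). unfold Arg. fold m c d.
    destruct (Rle_dec 0 d); [|rewrite Rabs_Ropp]; apply Rabs_pos_eq; lra. }
  rewrite HA. pose proof (acos_bound (c / m)).
  assert (Hs : 0 <= sin (acos (c / m))) by (apply sin_ge_0; lra).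
  assert (Habs : Rabs d = m * sin (acos (c / m))).
  { apply Rsqr_inj; [apply Rabs_pos | nra |].
    rewrite <- Rsqr_abs. pose proof (sin2_cos2 (acos (c / m))) as P.
    rewrite cos_acos in P by exact Hb. unfold Rsqr in *.
    replace (m * sin (acos (c / m)) * (m * sin (acos (c / m))))
      with (m * m * (1 - c / m * (c / m))) by nra.
    field_simplify; [nra | lra]. }
  split; [exact Hm|]. split; [rewrite cos_acos by exact Hb; field; lra|].
  destruct (Rle_dec 0 d) as [Hd0|Hd0].
  - exists 1. split; [now left|]. rewrite <- Habs, Rabs_pos_eq; lra.
  - exists (-1). split; [now right|]. rewrite <- Habs, Rabs_left; lra.
Qed.

Lemma root_components (a tau x y c d : R) :
  (((x, y) : C) + RtoC a - ((c, d) : C) * Cexp (RtoC (- tau) * (x, y)))%C = RtoC 0 <->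
  x + a = c * exp (- tau * x) * cos (- tau * y) - d * exp (- tau * x) * sin (- tau * y) /\
  y = c * exp (- tau * x) * sin (- tau * y) + d * exp (- tau * x) * cos (- tau * y).
Proof.
  unfold Cexp, RtoC, Cminus, Cplus, Copp, Cmult, Re, Im; simpl.
  replace (- tau * x - 0 * y) with (- tau * x) by ring.
  replace (- tau * y + 0 * x) with (- tau * y) by ring.
  split.
  - intros H. injection H. intros H1 H2. split; lra.
  - intros [H1 H2]. f_equal; lra.
Qed.

Lemma root_iff_system (a tau m phi s c d x y : R) : 0 < tau -> (s = 1 \/ s = -1) ->
  c = m * cos phi -> d = s * (m * sin phi) ->
  (((x, y) : C) + RtoC a - ((c, d) : C) * Cexp (RtoC (- tau) * (x, y)))%C = RtoC 0 <->
  char_system phi (tau * a) (tau * m) (tau * x) (s * (tau * y)).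
Proof.
  intros Ht Hs Hc Hd. rewrite root_components. unfold char_system. subst c d.
  replace (- tau * x) with (- (tau * x)) by ring.
  replace (- tau * y) with (- (tau * y)) by ring.
  rewrite cos_neg, sin_neg.
  destruct Hs as [-> | ->].
  - rewrite !Rmult_1_l, cos_minus, sin_minus.
    split; intros [H1 H2].
    + apply (f_equal (Rmult tau)) in H1, H2. split; lra.
    + split; apply (Rmult_eq_reg_l tau); lra.
  - replace (phi - -1 * (tau * y)) with (phi + tau * y) by ring.
    rewrite cos_plus, sin_plus.
    split; intros [H1 H2].
    + apply (f_equal (Rmult tau)) in H1, H2. split; lra.
    + split; apply (Rmult_eq_reg_l tau); lra.
Qed.

(* Stability of the delay equation is stability of the scaled system, since
   (x, y) |-> (tau x, s tau y) is a bijection preserving the sign of the real part. *)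
Lemma stable_iff_scaled (a tau m phi s c d : R) : 0 < tau -> (s = 1 \/ s = -1) ->
  c = m * cos phi -> d = s * (m * sin phi) ->
  (forall z : C, (z + RtoC a - (c, d) * Cexp (RtoC (- tau) * z))%C = RtoC 0 -> Re z < 0) <->
  (forall X Y, char_system phi (tau * a) (tau * m) X Y -> X < 0).
Proof.
  intros Ht Hs Hc Hd. split.
  - intros Hstable X Y Hsys.
    assert (Hroot := Hstable (X / tau, s * Y / tau)).
    rewrite (root_iff_system a tau m phi s c d) in Hroot by assumption.
    replace (tau * (X / tau)) with X in Hroot by (field; lra).
    replace (s * (tau * (s * Y / tau))) with Y in Hroot
      by (destruct Hs as [-> | ->]; field; lra).
    specialize (Hroot Hsys). simpl in Hroot.
    apply (Rmult_lt_compat_l tau) in Hroot; [|lra].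
    replace (tau * (X / tau)) with X in Hroot by (field; lra). lra.
  - intros Hstable [x y] Hroot. simpl.
    rewrite (root_iff_system a tau m phi s c d) in Hroot by assumption.
    pose proof (Hstable _ _ Hroot). nra.
Qed.

Theorem mainTheorem14 (a : R) (w : C) (tau : R) :
  Im w <> 0 ->
  0 < Rabs (Arg w) <= PI / 2 ->
  0 < tau ->
  ((forall z : C,
       (z + RtoC a - w * Cexp (RtoC (- tau) * z))%C = RtoC 0 -> Re z < 0)
   <->
   (0 < a /\ Cmod w < / tau * Rfun (- tau * a) (Rabs (Arg w)))).
Proof.
  intros Hd Hphi Ht.
  destruct (polar_form w Hd) as [Hm [Hc [s [Hs HIm]]]].
  destruct w as [c d]. simpl in Hc, HIm.
  rewrite (stable_iff_scaled a tau (Cmod (c, d)) (Rabs (Arg (c, d))) s c d) by assumption.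
  rewrite scaled_stability by (assumption || nra).
  replace (- tau * a) with (- (tau * a)) by ring.
  split; intros [Ha HR]; split.
  - apply (Rmult_lt_reg_l tau); lra.
  - apply (Rmult_lt_reg_l tau); [lra|]. rewrite <- Rmult_assoc, Rinv_r, Rmult_1_l by lra.
    exact HR.
  - nra.
  - apply (Rmult_lt_compat_l tau) in HR; [|lra].
    rewrite <- Rmult_assoc, Rinv_r, Rmult_1_l in HR by lra. exact HR.
Qed.
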